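(* Let $\theta_1,\dots,\theta_{10}$ be real numbers such that $0<\theta_i<\theta_j<\theta_k<180$ for each of the triples $(i,j,k)\in\{(2,4,6),(1,5,9),(1,5,10),(1,5,7),(1,3,7),(1,4,7),(3,5,8),(2,8,9),(6,7,10)\}$, and write $s_{ij}=\sin(\theta_j-\theta_i)$. Suppose $$s_{89}\,s_{1,10}\,s_{24}\,s_{35}\,s_{67}+s_{46}\,s_{19}\,s_{7,10}\,s_{35}\,s_{28}-s_{46}\,s_{38}\,s_{7,10}\,s_{29}\,s_{15}<0 .$$ Then there is no $\mathbf r=(r_1,\dots,r_{10})\in\mathbb{R}^{10}$ satisfying simultaneously the nine strict inequalities $$r_is_{jk}-r_js_{ik}+r_ks_{ij}>0\quad\text{for }(i,j,k)\in\{(2,4,6),(1,5,9),(1,5,10),(1,5,7)\},$$ $$-r_is_{jk}+r_js_{ik}-r_ks_{ij}>0\quad\text{for }(i,j,k)\in\{(1,3,7),(1,4,7),(3,5,8),(2,8,9),(6,7,10)\}.$$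
   Context: Angles are in degrees. *)

From Stdlib Require Import Reals.
Open Scope R_scope.

Definition sind (x : R) : R := sin (x * PI / 180).

Definition s (th : nat -> R) (i j : nat) : R := sind (th j - th i).

Definition L (th r : nat -> R) (i j k : nat) : R :=
  r i * s th j k - r j * s th i k + r k * s th i j.

Definition ord3 (th : nat -> R) (i j k : nat) : Prop :=
  0 < th i /\ th i < th j /\ th j < th k /\ th k < 180.

(* A Farkas-type certificate: weighting the nine forms by positive products of
   sines (and the form L 1 5 7 by minus the quantity assumed negative) gives a
   combination that vanishes identically in r and th, a consequence of the
   Plücker relations s_ij s_kl - s_ik s_jl + s_il s_jk = 0. Every weighted term
   is positive, so the sum cannot vanish. *)

From Stdlib Require Import Reals Lra.
Open Scope R_scope.

Lemma sind_pos (x : R) : 0 < x < 180 -> 0 < sind x.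
Proof.
  intros [Hx0 Hx180].
  pose proof PI_RGT_0 as HPI.
  assert (Harg : 0 < x * PI / 180 < PI).
  { split.
    - apply Rdiv_lt_0_compat; [apply Rmult_lt_0_compat|]; lra.
    - replace (x * PI / 180) with (PI * (x / 180)) by field.
      rewrite <- (Rmult_1_r PI) at 2.
      apply Rmult_lt_compat_l; [lra|].
      apply Rmult_lt_reg_r with 180; [lra|].
      unfold Rdiv; rewrite Rmult_assoc, Rinv_l; lra. }
  apply sin_gt_0; apply Harg.
Qed.

Lemma s_pos (th : nat -> R) (i j : nat) :
  th i < th j -> th j - th i < 180 -> 0 < s th i j.
Proof. intros; apply sind_pos; lra. Qed.

Lemma s_sin_cos (th : nat -> R) (i j : nat) :
  s th i j = sin (th j * PI / 180) * cos (th i * PI / 180)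
             - cos (th j * PI / 180) * sin (th i * PI / 180).
Proof. unfold s, sind; rewrite <- sin_minus; apply (f_equal sin); field. Qed.

Definition obstruction (th : nat -> R) : R :=
  s th 8 9 * s th 1 10 * s th 2 4 * s th 3 5 * s th 6 7
  + s th 4 6 * s th 1 9 * s th 7 10 * s th 3 5 * s th 2 8
  - s th 4 6 * s th 3 8 * s th 7 10 * s th 2 9 * s th 1 5.

Lemma certificate_vanishes (th r : nat -> R) :
  (s th 8 9 * s th 3 5 * s th 1 5 * s th 7 10 * s th 1 7) * L th r 2 4 6
  + (s th 4 6 * s th 3 5 * s th 2 8 * s th 7 10 * s th 1 7) * L th r 1 5 9
  + (s th 8 9 * s th 3 5 * s th 2 4 * s th 6 7 * s th 1 7) * L th r 1 5 10
  + (- obstruction th) * L th r 1 5 7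
  + (s th 4 6 * s th 2 9 * s th 1 5 * s th 7 10 * s th 5 8) * (- L th r 1 3 7)
  + (s th 8 9 * s th 3 5 * s th 1 5 * s th 7 10 * s th 2 6) * (- L th r 1 4 7)
  + (s th 4 6 * s th 2 9 * s th 1 5 * s th 7 10 * s th 1 7) * (- L th r 3 5 8)
  + (s th 4 6 * s th 3 5 * s th 1 5 * s th 7 10 * s th 1 7) * (- L th r 2 8 9)
  + (s th 8 9 * s th 3 5 * s th 1 5 * s th 2 4 * s th 1 7) * (- L th r 6 7 10) = 0.
Proof. unfold obstruction, L; rewrite !s_sin_cos; ring. Qed.

Ltac weighted_pos :=
  repeat apply Rmult_lt_0_compat; try (apply s_pos; lra); lra.

Theorem lemmal (th : nat -> R) :
  ord3 th 2 4 6 -> ord3 th 1 5 9 -> ord3 th 1 5 10 -> ord3 th 1 5 7 ->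
  ord3 th 1 3 7 -> ord3 th 1 4 7 -> ord3 th 3 5 8 -> ord3 th 2 8 9 ->
  ord3 th 6 7 10 ->
  s th 8 9 * s th 1 10 * s th 2 4 * s th 3 5 * s th 6 7
  + s th 4 6 * s th 1 9 * s th 7 10 * s th 3 5 * s th 2 8
  - s th 4 6 * s th 3 8 * s th 7 10 * s th 2 9 * s th 1 5 < 0 ->
  ~ (exists r : nat -> R,
       L th r 2 4 6 > 0 /\ L th r 1 5 9 > 0 /\ L th r 1 5 10 > 0 /\
       L th r 1 5 7 > 0 /\
       - L th r 1 3 7 > 0 /\ - L th r 1 4 7 > 0 /\ - L th r 3 5 8 > 0 /\
       - L th r 2 8 9 > 0 /\ - L th r 6 7 10 > 0).
Proof.
  unfold ord3; intros O246 O159 O1510 O157 O137 O147 O358 O289 O6710 Hobs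
    [r (F246 & F159 & F1510 & F157 & F137 & F147 & F358 & F289 & F6710)].
  fold (obstruction th) in Hobs.
  pose proof (certificate_vanishes th r) as Hzero.
  assert (0 < - obstruction th * L th r 1 5 7)
    by (apply Rmult_lt_0_compat; lra).
  assert (0 < s th 8 9 * s th 3 5 * s th 1 5 * s th 7 10 * s th 1 7 * L th r 2 4 6)
    by weighted_pos.
  assert (0 < s th 4 6 * s th 3 5 * s th 2 8 * s th 7 10 * s th 1 7 * L th r 1 5 9)
    by weighted_pos.
  assert (0 < s th 8 9 * s th 3 5 * s th 2 4 * s th 6 7 * s th 1 7 * L th r 1 5 10)
    by weighted_pos.
  assert (0 < s th 4 6 * s th 2 9 * s th 1 5 * s th 7 10 * s th 5 8 * - L th r 1 3 7)
    by weighted_pos.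
  assert (0 < s th 8 9 * s th 3 5 * s th 1 5 * s th 7 10 * s th 2 6 * - L th r 1 4 7)
    by weighted_pos.
  assert (0 < s th 4 6 * s th 2 9 * s th 1 5 * s th 7 10 * s th 1 7 * - L th r 3 5 8)
    by weighted_pos.
  assert (0 < s th 4 6 * s th 3 5 * s th 1 5 * s th 7 10 * s th 1 7 * - L th r 2 8 9)
    by weighted_pos.
  assert (0 < s th 8 9 * s th 3 5 * s th 1 5 * s th 2 4 * s th 1 7 * - L th r 6 7 10)
    by weighted_pos.
  lra.
Qed.
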